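(* Let $p$ be a prime and let $A$ be a Henselian valuation ring which is not a field, with field of fractions $K$, maximal ideal $\mathfrak{m}_A$, residue field $k$ and valuation $v_A$, where $\operatorname{char}K=\operatorname{char}k=p$. Let $L/K$ be a non-trivial Artin–Schreier extension. Then any $f\in K$ generating $L/K$ that satisfies one of the following properties is best: (i) $f\notin A$ and $p\nmid v_A(f)$; (ii) $f\notin A$ and $f=ug^{-p}$ for some $0\neq g\in\mathfrak{m}_A$ and $u\in A^\times$ whose residue class is not a $p$-th power in $k$; (iii) $f\in A^\times$ and $\bar f\notin\{x^p-x\mid x\in k\}$.
   Context: An element $f\in K$ generates $L/K$ if $L=K(\alpha)$ for a root $\alpha$ of $T^p-T=f$. Any two generators $f,f'$ satisfy $f'=i(f+h^p-h)$ for some $h\in K$, $1\le i\le p-1$. A generator $f$ is best if $v_A(f)\ge v_A(f')$ for every generator $f'$ of $L/K$, i.e. $v_A(1/f)=\inf_{h\in K,1\le i\le p-1}v_A(1/(i(f+h^p-h)))$. *)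

From HB Require Import structures.
From mathcomp Require Import all_boot all_order all_algebra all_field.
Set Implicit Arguments. Unset Strict Implicit. Unset Printing Implicit Defensive.
Import GRing.Theory.
Local Open Scope ring_scope.

Section Val.
Variable K : fieldType.
Variable A : {pred K}.

Definition is_valuation_ring : Prop :=
  [/\ 0 \in A, 1 \in A,
      (forall x y, x \in A -> y \in A -> x - y \in A),
      (forall x y, x \in A -> y \in A -> x * y \in A) &
      (forall x, x != 0 -> x \in A \/ x^-1 \in A)].

Definition unitA (x : K) : Prop := [/\ x \in A, x != 0 & x^-1 \in A].

Definition maxideal (x : K) : Prop := x \in A /\ ~ unitA x.

(* congruence modulo m_A: equality of residue classes in k = A/m_A *)
Definition res_eq (x y : K) : Prop := x \in A /\ y \in A /\ maxideal (x - y).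

Definition not_field : Prop := exists x, x != 0 /\ maxideal x.

Definition henselian : Prop :=
  forall (P : {poly K}), P \is monic -> (forall i, P`_i \in A) ->
  forall a, a \in A -> maxideal P.[a] -> unitA (P^`()).[a] ->
  exists b, [/\ b \in A, P.[b] = 0 & maxideal (b - a)].

(* v_A(x) <= v_A(y), with v_A(0) = +oo; v_A takes values in K^x/A^x *)
Definition vle (x y : K) : Prop := y = 0 \/ (x != 0 /\ y / x \in A).

(* p divides v_A(x) in the value group K^x/A^x (x <> 0) *)
Definition vdivisible (p : nat) (x : K) : Prop :=
  exists g : K, g != 0 /\ unitA (x / g ^+ p).
End Val.

Definition AS_generates (K : fieldType) (L : fieldExtType K) (p : nat) (f : K) : Prop :=
  exists alpha : L, alpha ^+ p - alpha = f%:A /\ (<<1%VS; alpha>>%VS = fullv).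

Definition AS_best (K : fieldType) (A : {pred K}) (L : fieldExtType K) (p : nat) (f : K) : Prop :=
  forall f' : K, AS_generates L p f' -> vle A f' f.

From HB Require Import structures.
From mathcomp Require Import all_boot all_order all_algebra all_field.
From mathcomp Require Import zify ring.
Set Implicit Arguments. Unset Strict Implicit. Unset Printing Implicit Defensive.
Import GRing.Theory.
Local Open Scope ring_scope.

(* Every generator of L/K has the form f' = j (f + k^p - k) with 0 < j < p:
   the K-automorphism a |-> a + 1 of L = K(a) moves another root b of an
   Artin-Schreier equation by some j in F_p^x, so b - j a is fixed, hence lies
   in K.  Since j is a unit of A, it remains to show v(f + k^p - k) <= v(f) for
   every k in K.  By the ultrametric inequality this can only fail when f and
   k^p - k have the same valuation and their leading terms cancel; in the three
   cases such a cancellation would make v(f) divisible by p, make the residue of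
   u a p-th power, or give the residue of f an Artin-Schreier root. *)

Section ArtinSchreierPolynomial.
Variables (R : fieldType) (p : nat).
Hypothesis pcharRp : p \in [pchar R].

Let p_gt1 : (1 < p)%N. Proof. exact/prime_gt1/(pcharf_prime pcharRp). Qed.

Lemma natr_inj_pchar i j : (i < p)%N -> (j < p)%N -> i%:R = j%:R :> R -> i = j.
Proof.
wlog le_ij : i j / (i <= j)%N.
  move=> wlog_ij ip jp eq_ij.
  by case: (leqP i j) => [|/ltnW] le; [apply: wlog_ij | apply/esym/wlog_ij].
move=> _ jp eq_ij.
have p_dvd : (p %| j - i)%N by rewrite (dvdn_pcharf pcharRp) natrB // eq_ij subrr.
by have [|/dvdn_leq/(_ p_dvd)] := posnP (j - i); lia.
Qed.

Definition Fp_translates (a : R) : seq R := [seq a + (i%:R : R) | i <- iota 0 p].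

Lemma size_Fp_translates a : size (Fp_translates a) = p.
Proof. by rewrite size_map size_iota. Qed.

Lemma uniq_Fp_translates a : uniq (Fp_translates a).
Proof.
rewrite map_inj_in_uniq ?iota_uniq // => i j.
by rewrite !mem_iota => /andP[_ ip] /andP[_ jp] /addrI; apply: natr_inj_pchar.
Qed.

Lemma AS_translate (a : R) i : (a + i%:R) ^+ p - (a + i%:R) = a ^+ p - a.
Proof.
rewrite -!(pFrobenius_autE pcharRp) rmorphD rmorph_nat.
by rewrite opprD addrACA subrr addr0.
Qed.

Definition AS_poly (c : R) : {poly R} := 'X^p - 'X - c%:P.

Lemma size_AS_poly c : size (AS_poly c) = p.+1.
Proof.
by rewrite /AS_poly -addrA size_polyDl size_polyXn // -opprD size_polyN size_XaddC ltnS.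
Qed.

Lemma monic_AS_poly c : AS_poly c \is monic.
Proof.
rewrite monicE /AS_poly -addrA lead_coefDl ?lead_coefXn //.
by rewrite size_polyXn -opprD size_polyN size_XaddC ltnS.
Qed.

Lemma root_AS_poly c x : root (AS_poly c) x = (x ^+ p - x == c).
Proof. by rewrite /root !hornerE subr_eq0. Qed.

Lemma AS_poly_prod_XsubC a c : a ^+ p - a = c ->
  AS_poly c = \prod_(z <- Fp_translates a) ('X - z%:P).
Proof.
move=> a_root; rewrite [LHS](@all_roots_prod_XsubC _ _ (Fp_translates a)).
- by rewrite (monicP (monic_AS_poly c)) scale1r.
- by rewrite size_AS_poly size_Fp_translates.
- by apply/allP => _ /mapP[i _ ->]; rewrite root_AS_poly AS_translate a_root.
- by rewrite uniq_rootsE uniq_Fp_translates.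
Qed.

Lemma Frobenius_fixed_natr (x : R) : x ^+ p = x -> exists2 i, (i < p)%N & x = i%:R.
Proof.
move=> x_fixed; have: root (AS_poly 0) x by rewrite root_AS_poly x_fixed subrr.
have zero_root : (0 : R) ^+ p - 0 = 0 by rewrite subr0 expr0n gtn_eqF // ltnW.
rewrite (AS_poly_prod_XsubC zero_root) root_prod_XsubC.
by case/mapP=> i; rewrite mem_iota add0r => /andP[_ ip] ->; exists i.
Qed.

Lemma roots_Fp_translates_eq0 (q : {poly R}) a :
  (size q <= p)%N -> all (root q) (Fp_translates a) -> q = 0.
Proof.
move=> size_q roots_q; apply/eqP/negP => /negP q_neq0.
have := max_poly_roots q_neq0 roots_q (uniq_Fp_translates a).
by rewrite size_Fp_translates ltnNge size_q.
Qed.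

End ArtinSchreierPolynomial.

Section ArtinSchreierExtension.
Variables (K : fieldType) (L : fieldExtType K) (p : nat).
Hypothesis pcharKp : p \in [pchar K].
Hypothesis dimL_gt1 : (1 < \dim {:L})%N.
Variables (f : K) (a : L).
Hypotheses (a_root : a ^+ p - a = f%:A) (a_gen : <<1; a>>%VS = fullv).

Let pcharLp : p \in [pchar L]. Proof. by rewrite pchar_lalg. Qed.

Lemma generator_notin1 (b : L) : <<1; b>>%VS = fullv -> b \notin 1%VS.
Proof.
by move=> b_gen; apply: contraL dimL_gt1 => /Fadjoin_idP b1; rewrite -b_gen b1 dimv1.
Qed.

Lemma minPoly_AS_generator : minPoly 1 a = AS_poly p (f%:A : L).
Proof.
have AS_over : AS_poly p (f%:A : L) \is a polyOver 1%VS.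
  by rewrite /AS_poly !rpredB ?rpredX ?polyOverX ?polyOverC ?rpredZ ?mem1v.
have min_dvd : minPoly 1 a %| AS_poly p (f%:A : L).
  by rewrite minPoly_dvdp // root_AS_poly a_root.
have /dvdp_prod_XsubC[m] : minPoly 1 a %| \prod_(z <- Fp_translates p a) ('X - z%:P).
  by rewrite -(AS_poly_prod_XsubC pcharLp a_root).
set s := mask m _; rewrite eqp_monic ?monic_minPoly ?monic_prod_XsubC // => /eqP min_prod.
have size_min : size (minPoly 1 a) = (size s).+1 by rewrite min_prod size_prod_XsubC.
have s_gt0 : (0 < size s)%N by move: size_min; rewrite size_minPoly => -[<-].
(* Trace argument: the subleading coefficient of the minimal polynomial puts
   [a *+ size s] in K, so p divides its degree. *)
have sum_s : \sum_(z <- s) z = a *+ size s + \sum_(z <- s) (z - a).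
  rewrite -[a *+ _]iter_addr_0 -(count_predT s) -big_const_seq -big_split /=.
  by apply: eq_bigr => z _; rewrite addrC subrK.
have mul_a_in1 : a *+ size s \in 1%VS.
  have := polyOverP (minPolyOver 1 a) (size s).-1.
  rewrite min_prod coefPn_prod_XsubC -?lt0n // rpredN sum_s rpredDr //.
  rewrite big_seq rpred_sum // => z /mem_mask /mapP[i _ ->].
  by rewrite addrAC subrr add0r rpred_nat.
have p_dvd_s : (p %| size s)%N.
  rewrite (dvdn_pcharf pcharKp); apply: contraLR (generator_notin1 a_gen) => s_neq0.
  have -> : a = (size s)%:R^-1 *: (a *+ size s) by rewrite -scaler_nat scalerA mulVf ?scale1r.
  by rewrite negbK rpredZ.
have size_s : size s = p.
  have := size_subseq (mask_subseq m (Fp_translates p a)).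
  by rewrite -/s size_Fp_translates => le_s_p; apply/anti_leq; rewrite le_s_p dvdn_leq.
apply/eqP; rewrite -(eqp_monic (monic_minPoly 1 a) (monic_AS_poly pcharLp _)).
by rewrite -(dvdp_size_eqp min_dvd) size_min (size_AS_poly pcharLp) size_s.
Qed.

Lemma root_minPoly_translate i : root (minPoly 1 a) (a + i%:R).
Proof. by rewrite minPoly_AS_generator root_AS_poly (AS_translate pcharLp) a_root. Qed.

Fact AS_shift_is_ahom : ahom_in {:L} (kHomExtend 1 \1 a (a + 1)).
Proof.
have := @kHomExtendP _ _ 1%AS 1%AS \1 a (a + 1) (subvv _) (kHom1 _ _).
rewrite lfun1_poly a_gen k1HomE.
by apply; apply: (root_minPoly_translate 1).
Qed.

Definition AS_shift : 'AEnd(L) := AHom AS_shift_is_ahom.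

Lemma AS_shift_generator : AS_shift a = a + 1.
Proof.
by apply: kHomExtend_val (kHom1 1 1) _; rewrite lfun1_poly; apply: (root_minPoly_translate 1).
Qed.

Lemma AS_shift_id x : x \in 1%VS -> AS_shift x = x.
Proof. by case/vlineP=> c ->; rewrite linearZ rmorph1. Qed.

Lemma map_poly_AS_shift q : q \is a polyOver 1%VS -> map_poly AS_shift q = q.
Proof. by move=> /polyOverP q1; apply/polyP => i; rewrite coef_map /= AS_shift_id. Qed.

Lemma AS_shift_fixed_in1 x : AS_shift x = x -> x \in 1%VS.
Proof.
move=> x_fixed; pose q := Fadjoin_poly 1 a x.
have q_over : q \is a polyOver 1%VS := Fadjoin_polyOver 1 a x.
have q_shift y : q.[AS_shift y] = AS_shift q.[y].
  by rewrite -horner_map map_poly_AS_shift.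
have q_translate i : q.[a + i%:R] = x.
  elim: i => [|i IHi]; first by rewrite addr0 Fadjoin_poly_eq // a_gen memvf.
  have -> : a + i.+1%:R = AS_shift (a + i%:R).
    by rewrite rmorphD /= AS_shift_generator AS_shift_id ?rpred_nat // -addrA -mulrS.
  by rewrite q_shift IHi x_fixed.
have deg_a : adjoin_degree 1 a = p.
  by apply: succn_inj; rewrite -size_minPoly minPoly_AS_generator size_AS_poly.
have /eqP : q - x%:P = 0.
  apply: (roots_Fp_translates_eq0 pcharLp (a := a)).
    rewrite (leq_trans (size_polyD _ _)) // geq_max size_polyN size_polyC -deg_a.
    by rewrite size_Fadjoin_poly (leq_trans (leq_b1 _)) // adjoin_deg_gt0.
  by apply/allP => _ /mapP[i _ ->]; rewrite /root !hornerE q_translate subrr.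
rewrite subr_eq0 => /eqP q_const.
by have := polyOverP q_over 0; rewrite q_const coefC.
Qed.

Lemma AS_generator_relation (f' : K) (b : L) :
    b ^+ p - b = f'%:A -> <<1; b>>%VS = fullv ->
  exists2 j : nat, (0 < j < p)%N & exists h : K, f' = j%:R * f + (h ^+ p - h).
Proof.
move=> b_root b_gen.
have shift_b_fixed : (AS_shift b - b) ^+ p = AS_shift b - b.
  have : AS_shift (b ^+ p - b) = b ^+ p - b by rewrite b_root AS_shift_id ?rpredZ ?mem1v.
  rewrite rmorphB rmorphXn /= => /eqP; rewrite subr_eq => /eqP shift_bp.
  by rewrite -(pFrobenius_autE pcharLp) rmorphB /= !pFrobenius_autE shift_bp; ring.
have [j lt_jp shift_b] := Frobenius_fixed_natr pcharLp shift_b_fixed.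
have j_gt0 : (0 < j)%N.
  rewrite lt0n; apply: contraNneq (generator_notin1 b_gen) => j0.
  by apply: AS_shift_fixed_in1; apply/eqP; rewrite -subr_eq0 shift_b j0.
have /AS_shift_fixed_in1/vlineP[h h_def] : AS_shift (b - j%:R * a) = b - j%:R * a.
  rewrite rmorphB rmorphM /= (AS_shift_id (rpred_nat _ j)) AS_shift_generator.
  by rewrite -(subrK b (AS_shift b)) shift_b; ring.
exists j; first by rewrite j_gt0.
have b_def : b = h%:A + j%:R * a by rewrite -h_def subrK.
exists h; apply: (fmorph_inj (in_alg L)).
rewrite rmorphD rmorphM rmorph_nat rmorphB rmorphXn /=.
rewrite /GRing.in_alg -b_root -a_root b_def -(pFrobenius_autE pcharLp).
by rewrite rmorphD rmorphM rmorph_nat /= !pFrobenius_autE; ring.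
Qed.
End ArtinSchreierExtension.

Section ValuationRing.
Variables (K : fieldType) (A : {pred K}).
Hypothesis A_val : is_valuation_ring A.

Fact valuation_ring_subring_closed : subring_closed A.
Proof. by case: A_val => _ A1 AB AM _; split. Qed.

HB.instance Definition _ :=
  GRing.isSubringClosed.Build K A valuation_ring_subring_closed.

Lemma unitAP x : reflect (unitA A x) [&& x \in A, x != 0 & x^-1 \in A].
Proof. by apply: (iffP and3P) => -[]. Qed.

Lemma unitA1 : unitA A 1.
Proof. by split; rewrite ?invr1 ?rpred1 ?oner_eq0. Qed.

Lemma unitAM x y : unitA A x -> unitA A y -> unitA A (x * y).
Proof. by move=> [xA x0 xVA] [yA y0 yVA]; split; rewrite ?invfM ?rpredM ?mulf_neq0. Qed.

Lemma maxideal_inv_notin x : x \notin A -> x != 0 /\ maxideal A x^-1.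
Proof.
move=> xNA; have x0 : x != 0 by apply: contraNneq xNA => ->; rewrite rpred0.
have xVA : x^-1 \in A by case: A_val => _ _ _ _ /(_ x x0) [xA|]; first by rewrite xA in xNA.
by split=> //; split=> // -[_ _]; rewrite invrK; apply/negP.
Qed.

Lemma notin_maxideal_inv x : x != 0 -> maxideal A x^-1 -> x \notin A.
Proof.
by move=> x0 [xVA xVN]; apply/negP => xA; apply: xVN; split; rewrite ?invr_eq0 ?invrK.
Qed.

Lemma unitA_or_maxideal x : x \in A -> unitA A x \/ maxideal A x.
Proof. by move=> xA; have [|xN] := unitAP x; [left | right]. Qed.

Lemma valuation_trichotomy x : x != 0 -> [\/ unitA A x, maxideal A x | maxideal A x^-1].
Proof.
move=> x0; have [xA|xNA] := boolP (x \in A).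
  by case: (unitA_or_maxideal xA) => ?; [apply: Or31 | apply: Or32].
by apply: Or33; case: (maxideal_inv_notin xNA).
Qed.

Lemma maxidealMl a y : a \in A -> maxideal A y -> maxideal A (a * y).
Proof.
move=> aA [yA yN]; split; first by rewrite rpredM.
move=> [_ ay0 ayVA]; move: (ay0); rewrite mulf_eq0 negb_or => /andP[a0 y0].
by apply: yN; split; rewrite // -[y^-1](mulVKf a0) -invfM rpredM.
Qed.

Lemma maxidealD y z : maxideal A y -> maxideal A z -> maxideal A (y + z).
Proof.
move=> y_max z_max; have [->|z0] := eqVneq z 0; first by rewrite addr0.
have [->|y0] := eqVneq y 0; first by rewrite add0r.
have [yzA|zyA] : y / z \in A \/ z / y \in A.
  by case: A_val => _ _ _ _ /(_ (y / z)); rewrite invf_div mulf_neq0 ?invr_eq0 //; apply.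
- have -> : y + z = (y / z + 1) * z by rewrite mulrDl divfK ?mul1r.
  by apply: maxidealMl; rewrite ?rpredD ?rpred1.
- have -> : y + z = (1 + z / y) * y by rewrite mulrDl divfK ?mul1r.
  by apply: maxidealMl; rewrite ?rpredD ?rpred1.
Qed.

Lemma maxidealN y : maxideal A y -> maxideal A (- y).
Proof. by rewrite -mulN1r; apply: maxidealMl; rewrite rpredN rpred1. Qed.

Lemma maxidealX x n : maxideal A x -> maxideal A (x ^+ n.+1).
Proof.
by move=> x_max; rewrite exprSr; apply: maxidealMl; rewrite ?rpredX //; case: x_max.
Qed.

Lemma unitA_addr_maxideal u y : unitA A u -> maxideal A y -> unitA A (u + y).
Proof.
move=> u_unit y_max; have [uA _ _] := u_unit.
have uyA : u + y \in A by rewrite rpredD //; case: y_max.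
case: (unitA_or_maxideal uyA) => // /maxidealD /(_ (maxidealN y_max)).
by rewrite addrK => -[_ /(_ u_unit)[]].
Qed.

Lemma vle_refl x : vle A x x.
Proof. by have [->|x0] := eqVneq x 0; [left | right; rewrite divff ?rpred1]. Qed.

Lemma vle_mulr_unit x y u : vle A x y -> unitA A u -> vle A (x * u) y.
Proof.
move=> [->|[x0 yxA]] [_ u0 uVA]; [by left | right].
by rewrite mulf_neq0 // invfM mulrA rpredM.
Qed.

Lemma vle_addr_no_cancel x y : x != 0 ->
  (unitA A (x / y) -> ~ maxideal A (1 + y / x)) -> vle A (x + y) x.
Proof.
move=> x0 no_cancel; have [->|y0] := eqVneq y 0; first by rewrite addr0; apply: vle_refl.
have vle_unit_ratio : unitA A (1 + y / x) -> vle A (x + y) x.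
  have -> : x + y = x * (1 + y / x) by rewrite mulrDr mulr1 mulrCA divff ?mulr1.
  exact: vle_mulr_unit (vle_refl x).
have [xy_unit|xy_max|] := valuation_trichotomy (mulf_neq0 x0 (invr_neq0 y0)).
- have : 1 + y / x \in A by rewrite rpredD ?rpred1 // -invf_div; case: xy_unit.
  by case/unitA_or_maxideal => // /(no_cancel xy_unit).
- have -> : x + y = y * (1 + x / y) by rewrite addrC mulrDr mulr1 mulrCA divff ?mulr1.
  apply: vle_mulr_unit (unitA_addr_maxideal unitA1 xy_max).
  by right; split=> //; case: xy_max.
- by rewrite invf_div => /(unitA_addr_maxideal unitA1)/vle_unit_ratio.
Qed.

Lemma unitA_div_in x y : unitA A (x / y) -> (x \in A) = (y \in A).
Proof.
move=> xy_unit; have [_ xy0 _] := xy_unit; have [x0 y0] : x != 0 /\ y != 0.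
  by move: xy0; rewrite mulf_eq0 invr_eq0 negb_or => /andP.
have [xyA _ yxA] := xy_unit; rewrite invf_div in yxA.
apply/idP/idP => [xA|yA]; last by rewrite -(divfK y0 x) rpredM.
by rewrite -(divfK x0 y) rpredM.
Qed.

Lemma expr_inA x n : x ^+ n.+1 \in A -> x \in A.
Proof.
apply: contraTT => xNA; have [x0 xV_max] := maxideal_inv_notin xNA.
by apply: notin_maxideal_inv; rewrite ?expf_neq0 // -exprVn; apply: maxidealX.
Qed.

Lemma maxideal_div_expr x n : x \notin A -> maxideal A (x / x ^+ n.+2).
Proof.
move=> xNA; have [x0 xV_max] := maxideal_inv_notin xNA.
by rewrite exprS invfM mulrA divff // mul1r -exprVn; apply: maxidealX.
Qed.

Variable p : nat.
Hypothesis pcharKp : p \in [pchar K].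

Let p_gt1 : (1 < p)%N. Proof. exact/prime_gt1/(pcharf_prime pcharKp). Qed.

Lemma unitA_natr_lt_pchar j : (0 < j < p)%N -> unitA A j%:R.
Proof.
case/andP=> j_gt0 lt_jp; have j0 : j%:R != 0 :> K.
  by rewrite -(dvdn_pcharf pcharKp); apply: contraTN j_gt0 => /dvdn_leq; lia.
have j_fermat : (j%:R : K) ^+ (p - 2).+1 = 1.
  have p_eq : (p - 2).+2 = p by rewrite -addn2 subnK.
  apply: (mulIf j0); rewrite mul1r -exprSr p_eq.
  by rewrite -(pFrobenius_autE pcharKp) pFrobenius_aut_nat.
split; rewrite ?rpred_nat //.
have -> : (j%:R : K)^-1 = j%:R ^+ (p - 2).
  by apply: (mulfI j0); rewrite divff // -exprS j_fermat.
by rewrite rpredX ?rpred_nat.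
Qed.

Lemma maxideal_AS_ratio k : k \notin A -> maxideal A (k / k ^+ p).
Proof. by rewrite -(subnKC p_gt1); apply: maxideal_div_expr. Qed.

Lemma AS_term_factor (k : K) : k != 0 -> k ^+ p - k = k ^+ p * (1 - k / k ^+ p).
Proof. by move=> k0; rewrite mulrBr mulr1 mulrCA divff ?mulr1 // expf_neq0. Qed.

Lemma unitA_AS_term_ratio k : k \notin A -> unitA A ((k ^+ p - k) / k ^+ p).
Proof.
move=> kNA; have [k0 _] := maxideal_inv_notin kNA.
rewrite AS_term_factor // mulrC mulKf ?expf_neq0 //.
exact/unitA_addr_maxideal/maxidealN/maxideal_AS_ratio/kNA/unitA1.
Qed.

Lemma unitA_div_expr_of_AS_term x k : k \notin A ->
  unitA A (x / (k ^+ p - k)) -> unitA A (x / k ^+ p).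
Proof.
move=> kNA x_unit; have t_unit := unitA_AS_term_ratio kNA.
have t0 : k ^+ p - k != 0 by case: t_unit => _; rewrite mulf_eq0 negb_or => /andP[].
by have := unitAM x_unit t_unit; rewrite mulrA divfK.
Qed.

Lemma vle_AS_shift_pole_coprime f k : f \notin A -> ~ vdivisible A p f ->
  vle A (f + (k ^+ p - k)) f.
Proof.
move=> fNA f_ndiv; have [f0 _] := maxideal_inv_notin fNA.
apply: vle_addr_no_cancel => // ft_unit _.
have [kA|kNA] := boolP (k \in A).
  by move: fNA; rewrite (unitA_div_in ft_unit) rpredB ?rpredX.
apply: f_ndiv; exists k; split; first by have [] := maxideal_inv_notin kNA.
exact: unitA_div_expr_of_AS_term.
Qed.

Lemma vle_AS_shift_unit f k : unitA A f ->
    ~ (exists x, x \in A /\ res_eq A f (x ^+ p - x)) ->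
  vle A (f + (k ^+ p - k)) f.
Proof.
move=> f_unit f_nres; have [fA f0 _] := f_unit.
apply: vle_addr_no_cancel => // ft_unit ft_max.
have [kA|kNA] := boolP (k \in A); last first.
  have := unitA_div_in (unitA_AS_term_ratio kNA).
  rewrite -(unitA_div_in ft_unit) fA -(subnKC p_gt1) => /esym/expr_inA kA.
  by rewrite kA in kNA.
apply: f_nres; exists (- k); split; rewrite ?rpredN //; split=> //.
split; first by rewrite rpredB ?rpredX ?rpredN.
have -> : f - ((- k) ^+ p - - k) = f * (1 + (k ^+ p - k) / f).
  rewrite mulrDr mulr1 mulrCA divff // mulr1 -(pFrobenius_autE pcharKp) rmorphN /=.
  by rewrite pFrobenius_autE; ring.
by apply: maxidealMl.
Qed.

Lemma vle_AS_shift_pole_nonpower g u k : u / g ^+ p \notin A -> unitA A u ->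
    ~ (exists x, x \in A /\ res_eq A u (x ^+ p)) ->
  vle A (u / g ^+ p + (k ^+ p - k)) (u / g ^+ p).
Proof.
set f := u / g ^+ p => fNA u_unit u_npow; have [uA u0 _] := u_unit.
have [f0 _] := maxideal_inv_notin fNA.
have g0 : g != 0.
  by apply: contraNneq f0 => g0; rewrite /f g0 expr0n gtn_eqF ?invr0 ?mulr0 // ltnW.
apply: vle_addr_no_cancel => // ft_unit ft_max.
have [kA|kNA] := boolP (k \in A).
  by move: fNA; rewrite (unitA_div_in ft_unit) rpredB ?rpredX.
have [k0 _] := maxideal_inv_notin kNA; set w := g * k.
have wA : w \in A.
  have w_unit : unitA A (u / w ^+ p).
    by rewrite exprMn invfM mulrA; apply: unitA_div_expr_of_AS_term.
  by move: uA; rewrite (unitA_div_in w_unit) -(subnKC (ltnW p_gt1)) => /expr_inA.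
apply: u_npow; exists (- w); split; rewrite ?rpredN //; split=> //.
split; first by rewrite rpredX ?rpredN.
have -> : u - (- w) ^+ p = u * (1 + (k ^+ p - k) / f) + w ^+ p * (k / k ^+ p).
  rewrite -(pFrobenius_autE pcharKp) rmorphN /= pFrobenius_autE /w /f exprMn.
  by field; rewrite !expf_neq0 ?u0.
apply: maxidealD; first exact: maxidealMl.
by apply: maxidealMl (maxideal_AS_ratio kNA); rewrite rpredX.
Qed.
End ValuationRing.

Lemma AS_best_of_vle_shifts (K : fieldType) (A : {pred K}) (L : fieldExtType K) p f :
    p \in [pchar K] -> is_valuation_ring A -> (1 < \dim {:L})%N ->
    AS_generates L p f -> (forall k : K, vle A (f + (k ^+ p - k)) f) ->
  AS_best A L p f.
Proof.
move=> pcharKp A_val dimL_gt1 [a [a_root a_gen]] vle_shifts f' [b [b_root b_gen]].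
have [j j_range [h ->]] := AS_generator_relation pcharKp dimL_gt1 a_root a_gen b_root b_gen.
have j_unit := unitA_natr_lt_pchar A_val pcharKp j_range; have [_ j0 _] := j_unit.
have -> : j%:R * f + (h ^+ p - h) = (f + ((h / j%:R) ^+ p - h / j%:R)) * j%:R.
  rewrite exprMn exprVn -[j%:R ^+ p](pFrobenius_autE pcharKp) pFrobenius_aut_nat.
  by rewrite mulrDl mulrBl !divfK // mulrC.
apply: (vle_mulr_unit A_val _ j_unit).
exact: (vle_shifts (h / j%:R)).
Qed.

Theorem corollary3p2p4 (p : nat) (K : fieldType) (A : {pred K})
  (L : fieldExtType K) (f : K) :
  prime p -> p \in [pchar K] ->
  is_valuation_ring A -> henselian A -> not_field A ->
  (1 < \dim (fullv : {vspace L}))%N ->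
  AS_generates L p f ->
  ( (f \notin A /\ ~ vdivisible A p f)
    \/ (f \notin A /\
        exists g u : K, [/\ g != 0, maxideal A g, unitA A u, f = u / g ^+ p &
                         ~ (exists x : K, x \in A /\ res_eq A u (x ^+ p))])
    \/ (unitA A f /\ ~ (exists x : K, x \in A /\ res_eq A f (x ^+ p - x))) ) ->
  AS_best A L p f.
Proof.
move=> _ pcharKp A_val _ _ dimL_gt1 f_gen f_cases.
apply: (AS_best_of_vle_shifts pcharKp A_val dimL_gt1 f_gen) => k.
case: f_cases => [[fNA f_ndiv]|[[fNA [g [u [_ _ u_unit f_def u_npow]]]]|[f_unit f_nres]]].
- exact: vle_AS_shift_pole_coprime.
- by rewrite f_def in fNA *; apply: vle_AS_shift_pole_nonpower.
- exact: vle_AS_shift_unit.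
Qed.
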